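(* Let $\mathbb{R} = A \cup B$ be a partition of $\mathbb{R}$ into two disjoint sets $A$ and $B$, each viewed as a suborder of $(\mathbb{R},<)$. Then there is an open interval $I = (a,b)$, with $-\infty \le a < b \le \infty$, such that $A \cap I$ is not order-isomorphic to $B \cap I$. Equivalently, $\mathbb{R}$ cannot be partitioned into two everywhere isomorphic sets.
   Context: Two disjoint sets $A, B \subseteq \mathbb{R}$ are called everywhere isomorphic if for every open interval $I=(a,b)$ with $-\infty\le a<b\le\infty$ (so $a=-\infty$, $b=\infty$ are allowed), the suborders $A\cap I$ and $B\cap I$ of $(\mathbb{R},<)$ are order-isomorphic. *)

From Stdlib Require Import Reals.
Open Scope R_scope.

(* Extended endpoints: None below means -oo, None above means +oo. *)
Definition lower_ok (a : option R) (x : R) : Prop :=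
  match a with None => True | Some a' => a' < x end.
Definition upper_ok (b : option R) (x : R) : Prop :=
  match b with None => True | Some b' => x < b' end.

Definition ext_lt (a b : option R) : Prop :=
  match a, b with Some a', Some b' => a' < b' | _, _ => True end.

Definition ext_open_interval (a b : option R) (x : R) : Prop :=
  lower_ok a x /\ upper_ok b x.

Definition order_isomorphic (X Y : R -> Prop) : Prop :=
  exists (f : {x : R | X x} -> {y : R | Y y}) (g : {y : R | Y y} -> {x : R | X x}),
    (forall x, g (f x) = x) /\ (forall y, f (g y) = y) /\
    (forall x1 x2, proj1_sig x1 < proj1_sig x2 <-> proj1_sig (f x1) < proj1_sig (f x2)).

Definition everywhere_isomorphic (A B : R -> Prop) : Prop :=
  (forall x, ~ (A x /\ B x)) /\
  forall a b : option R, ext_lt a b ->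
    order_isomorphic (fun x => A x /\ ext_open_interval a b x)
                     (fun x => B x /\ ext_open_interval a b x).

(* Suppose A and B partition R and A /\ I, B /\ I are order-isomorphic for
   every open interval I.  Then both colours are dense, and every order
   isomorphism of A /\ I onto B /\ I extends, by taking suprema, to a
   "switch" of I: a strictly increasing self-map of I exchanging the colours.
   A switch has no fixed point, so by the Knaster-Tarski fixed point theorem
   on a segment it cannot send both ends of a segment inwards.  Combining the
   extensions of an isomorphism and of its inverse, this yields
   - on R, a switch H moving some point c up, to d = H c;
   - on (d, +oo), a switch M moving every point down, with dense image.
   The square of M preserves colours and pushes every orbit in (d, +oo)
   below d + 1; composing a suitable iterate of it with H gives a weakly
   increasing colour-exchanging map sending the ends of [(c + d)/2, d + 1]
   inwards, which is impossible. *)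

From Stdlib Require Import Reals Lra Classical ClassicalEpsilon ProofIrrelevance.
Open Scope R_scope.

Local Notation val := proj1_sig.

Definition dense (P : R -> Prop) : Prop :=
  forall u v, u < v -> exists x, P x /\ u < x /\ x < v.

(* A choice of least upper bound, specified only for bounded nonempty sets. *)
Definition lub (E : R -> Prop) : R := epsilon (inhabits 0) (is_lub E).

Lemma lub_spec (E : R -> Prop) : bound E -> (exists x, E x) -> is_lub E (lub E).
Proof.
  intros bounded nonempty. unfold lub. apply epsilon_spec.
  destruct (completeness E bounded nonempty) as [m Hm]. now exists m.
Qed.

Section Intervals.
Variables a b : option R.
Local Notation I := (ext_open_interval a b).

Lemma interval_convex x y t : I x -> I y -> x <= t -> t <= y -> I t.
Proof.
  destruct a, b; unfold ext_open_interval, lower_ok, upper_ok; intuition lra.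
Qed.

Lemma interval_unbounded_below x : I x -> exists u, I u /\ u < x.
Proof.
  intro Ix. destruct a as [a'|]; [exists ((a' + x) / 2) | exists (x - 1)];
    destruct b; unfold ext_open_interval, lower_ok, upper_ok in *; intuition lra.
Qed.

Lemma interval_unbounded_above x : I x -> exists v, I v /\ x < v.
Proof.
  intro Ix. destruct b as [b'|]; [exists ((b' + x) / 2) | exists (x + 1)];
    destruct a; unfold ext_open_interval, lower_ok, upper_ok in *; intuition lra.
Qed.

Lemma dense_in_interval (P : R -> Prop) u v :
  dense P -> I u -> I v -> u < v -> exists x, P x /\ I x /\ u < x < v.
Proof.
  intros P_dense Iu Iv Huv. destruct (P_dense u v Huv) as [x [Px Hx]].
  exists x. split; [exact Px | split; [apply (interval_convex u v); auto; lra | exact Hx]].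
Qed.

End Intervals.

(* The fixed point is
   the supremum of the points that are not moved down. *)
Lemma monotone_fixpoint (G : R -> R) c z :
  c <= z -> (forall x y, c <= x -> x <= y -> y <= z -> G x <= G y) ->
  c <= G c -> G z <= z -> exists w, c <= w <= z /\ G w = w.
Proof.
  intros Hcz G_mono Hc Hz.
  set (S := fun x => (c <= x <= z) /\ x <= G x).
  assert (HS : is_lub S (lub S)).
  { apply lub_spec; [exists z; intros x [? _]; lra | exists c; split; lra]. }
  set (w := lub S) in HS. destruct HS as [w_upper w_least].
  assert (Hcw : c <= w) by (apply w_upper; split; lra).
  assert (Hwz : w <= z) by (apply w_least; intros x [? _]; lra).
  assert (up : w <= G w).
  { apply w_least. intros x [Hx HxG]. assert (x <= w) by (apply w_upper; now split).
    assert (G x <= G w) by (apply G_mono; lra). lra. }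
  assert (Gw_le_z : G w <= z) by (assert (G w <= G z) by (apply G_mono; lra); lra).
  assert (down : G w <= w).
  { apply w_upper. split; [lra|]. apply G_mono; lra. }
  exists w. split; [lra | lra].
Qed.

Definition switch (P Q I : R -> Prop) (F : R -> R) : Prop :=
  (forall x, I x -> I (F x)) /\ (forall x y, I x -> I y -> x < y -> F x < F y) /\
  (forall x, I x -> P x -> Q (F x)) /\ (forall x, I x -> Q x -> P (F x)).

Lemma switch_sym P Q I F : switch P Q I F -> switch Q P I F.
Proof. unfold switch; tauto. Qed.

Lemma inverse_monotone (X Y : R -> Prop) (f : {x | X x} -> {y | Y y})
    (g : {y | Y y} -> {x | X x}) :
  (forall y, f (g y) = y) ->
  (forall x1 x2, val x1 < val x2 <-> val (f x1) < val (f x2)) ->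
  forall y1 y2, val y1 < val y2 <-> val (g y1) < val (g y2).
Proof. intros fg f_mono y1 y2. rewrite (f_mono (g y1) (g y2)), !fg. tauto. Qed.

Section Extension.
Variables (P Q : R -> Prop) (a b : option R).
Local Notation I := (ext_open_interval a b).
Hypothesis disjoint : forall x, ~ (P x /\ Q x).
Hypothesis cover : forall x, P x \/ Q x.
Hypothesis P_dense : dense P.
Variable f : {x | P x /\ I x} -> {y | Q y /\ I y}.
Variable g : {y | Q y /\ I y} -> {x | P x /\ I x}.
Hypothesis fg : forall y, f (g y) = y.
Hypothesis f_mono : forall p1 p2, val p1 < val p2 <-> val (f p1) < val (f p2).

Lemma P_point_between u v : I u -> I v -> u < v ->
  exists p : {x | P x /\ I x}, u < val p < v.
Proof.
  intros Iu Iv Huv. destruct (dense_in_interval a b P u v) as [x [Px [Ix Hx]]]; auto.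
  now exists (exist _ x (conj Px Ix)).
Qed.

Definition values_below (x : R) (v : R) : Prop :=
  exists p, val p < x /\ v = val (f p).

Definition extension (x : R) : R :=
  match excluded_middle_informative (P x /\ I x) with
  | left h => val (f (exist _ x h))
  | right _ => lub (values_below x)
  end.

Lemma extension_agrees p : extension (val p) = val (f p).
Proof.
  destruct p as [x h]. unfold extension; simpl.
  destruct (excluded_middle_informative _) as [h' | nh]; [| contradiction].
  now rewrite (proof_irrelevance _ h' h).
Qed.

Lemma extension_agrees_at x (h : P x /\ I x) : extension x = val (f (exist _ x h)).
Proof. exact (extension_agrees (exist _ x h)). Qed.

(* On [Q /\ I] the supremum is well defined, [P] being dense around [x]. *)
Lemma extension_is_lub x : Q x -> I x -> is_lub (values_below x) (extension x).
Proof.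
  intros Qx Ix. unfold extension.
  destruct (excluded_middle_informative _) as [h | _];
    [exfalso; exact (disjoint x (conj (proj1 h) Qx)) |].
  apply lub_spec.
  - destruct (interval_unbounded_above a b x Ix) as [v [Iv Hv]].
    destruct (P_point_between x v Ix Iv Hv) as [p [Hp _]].
    exists (val (f p)). intros w [p' [Hp' ->]]. left. apply f_mono. lra.
  - destruct (interval_unbounded_below a b x Ix) as [u [Iu Hu]].
    destruct (P_point_between u x Iu Ix Hu) as [p [_ Hp]].
    now exists (val (f p)), p.
Qed.

Lemma extension_below x p : I x -> x < val p -> extension x < val (f p).
Proof.
  intros Ix Hx. destruct (cover x) as [Px | Qx].
  - rewrite (extension_agrees_at x (conj Px Ix)). now apply f_mono.
  - destruct (P_point_between x (val p) Ix (proj2 (proj2_sig p)) Hx) as [p' [H1 H2]].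
    apply Rle_lt_trans with (val (f p')); [| now apply f_mono].
    apply (extension_is_lub x Qx Ix). intros w [p'' [Hp'' ->]]. left. apply f_mono. lra.
Qed.

Lemma extension_above x p : I x -> val p < x -> val (f p) < extension x.
Proof.
  intros Ix Hx. destruct (cover x) as [Px | Qx].
  - rewrite (extension_agrees_at x (conj Px Ix)). now apply f_mono.
  - destruct (P_point_between (val p) x (proj2 (proj2_sig p)) Ix Hx) as [p' [H1 H2]].
    apply Rlt_le_trans with (val (f p')); [now apply f_mono |].
    apply (extension_is_lub x Qx Ix). now exists p'.
Qed.

(* Separating [x < y] by a point of [P] shows strict monotonicity. *)
Lemma extension_increasing x y : I x -> I y -> x < y -> extension x < extension y.
Proof.
  intros Ix Iy Hxy. destruct (P_point_between x y Ix Iy Hxy) as [p [H1 H2]].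
  apply Rlt_trans with (val (f p)); [now apply extension_below | now apply extension_above].
Qed.

(* The extension maps [I] into [I], squeezed between values of [f]. *)
Lemma extension_maps_into x : I x -> I (extension x).
Proof.
  intro Ix.
  destruct (interval_unbounded_below a b x Ix) as [u [Iu Hu]].
  destruct (interval_unbounded_above a b x Ix) as [v [Iv Hv]].
  destruct (P_point_between u x Iu Ix Hu) as [p [_ Hp]].
  destruct (P_point_between x v Ix Iv Hv) as [q [Hq _]].
  apply (interval_convex a b (val (f p)) (val (f q))).
  - exact (proj2 (proj2_sig (f p))).
  - exact (proj2 (proj2_sig (f q))).
  - left. now apply extension_above.
  - left. now apply extension_below.
Qed.

(* A [Q]-point cannot be sent to a [Q]-point [y]: [y] is already the image
   of the [P]-point [g y], and the extension is injective. *)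
Lemma extension_swaps_Q x : I x -> Q x -> P (extension x).
Proof.
  intros Ix Qx. destruct (cover (extension x)) as [? | Qy]; [assumption | exfalso].
  set (y := exist (fun y => Q y /\ I y) _ (conj Qy (extension_maps_into x Ix))).
  assert (same_image : extension (val (g y)) = extension x)
    by (now rewrite extension_agrees, fg).
  destruct (proj2_sig (g y)) as [P_gy I_gy].
  destruct (Rtotal_order (val (g y)) x) as [Hlt | [Heq | Hgt]].
  - pose proof (extension_increasing _ _ I_gy Ix Hlt). lra.
  - apply (disjoint x). split; [now rewrite <- Heq | exact Qx].
  - pose proof (extension_increasing _ _ Ix I_gy Hgt). lra.
Qed.

Lemma iso_extends_to_switch :
  exists F, switch P Q I F /\ forall p, F (val p) = val (f p).
Proof.
  exists extension. split; [| exact extension_agrees].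
  split; [exact extension_maps_into |].
  split; [exact extension_increasing |].
  split; [| exact extension_swaps_Q].
  intros x Ix Px. rewrite (extension_agrees_at x (conj Px Ix)).
  exact (proj1 (proj2_sig (f _))).
Qed.

End Extension.

Section Switches.
Variables A B : R -> Prop.
Hypothesis disjoint : forall x, ~ (A x /\ B x).
Hypothesis cover : forall x, A x \/ B x.

Lemma swap_moves (G : R -> R) x : (A x -> B (G x)) -> (B x -> A (G x)) -> G x <> x.
Proof.
  intros AB BA E. apply (disjoint x).
  destruct (cover x) as [Ax | Bx]; split; auto; rewrite <- E; auto.
Qed.

Lemma no_inward_swap (G : R -> R) c z :
  c <= z -> (forall x y, c <= x -> x <= y -> y <= z -> G x <= G y) ->
  (forall x, c <= x <= z -> A x -> B (G x)) ->
  (forall x, c <= x <= z -> B x -> A (G x)) ->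
  c <= G c -> G z <= z -> False.
Proof.
  intros Hcz G_mono AB BA Hc Hz.
  destruct (monotone_fixpoint G c z Hcz G_mono Hc Hz) as [w [Hw E]].
  exact (swap_moves G w (AB w Hw) (BA w Hw) E).
Qed.

Section OnInterval.
Variables a b : option R.
Local Notation I := (ext_open_interval a b).

Lemma switch_no_inward F c z :
  switch A B I F -> I c -> I z -> c < z -> c < F c -> F z < z -> False.
Proof.
  intros [_ [F_mono [AB BA]]] Ic Iz Hcz Hc Hz.
  assert (Iseg : forall x, c <= x <= z -> I x)
    by (intros x Hx; apply (interval_convex a b c z); tauto).
  apply (no_inward_swap F c z); try lra.
  - intros x y Hx Hxy Hy. destruct (Rle_lt_or_eq_dec x y Hxy) as [Hlt | ->]; [| lra].
    left. apply F_mono; [apply Iseg | apply Iseg | ]; lra.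
  - intros x Hx. apply AB, Iseg, Hx.
  - intros x Hx. apply BA, Iseg, Hx.
Qed.

Lemma switch_up_point (P : R -> Prop) F y :
  dense P -> switch A B I F -> I y -> y < F y -> exists p, P p /\ I p /\ p < F p.
Proof.
  intros P_dense [F_in [F_mono _]] Iy Hy.
  destruct (dense_in_interval a b P y (F y)) as [p [Pp [Ip Hp]]]; auto.
  assert (F y < F p) by (apply F_mono; auto; lra).
  exists p. split; [exact Pp | split; [exact Ip | lra]].
Qed.

Lemma switch_descending F :
  switch A B I F -> ~ (exists y, I y /\ y < F y) -> forall y, I y -> F y < y.
Proof.
  intros [_ [_ [AB BA]]] no_up y Iy.
  destruct (Rtotal_order (F y) y) as [Hlt | [Heq | Hgt]]; [exact Hlt | |].
  - now destruct (swap_moves F y (AB y Iy) (BA y Iy)).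
  - exfalso. apply no_up. now exists y.
Qed.

Lemma image_dense (P : R -> Prop) (F : R -> R) :
  dense P -> (forall y, I y -> P y -> exists t, I t /\ F t = y) ->
  forall u v, I u -> I v -> u < v -> exists t, I t /\ u < F t < v.
Proof.
  intros P_dense hit u v Iu Iv Huv.
  destruct (dense_in_interval a b P u v) as [y [Py [Iy Hy]]]; auto.
  destruct (hit y Iy Py) as [t [It <-]]. now exists t.
Qed.

(* Two switches inverse to each other on the colour classes, as obtained
   from an order isomorphism and its inverse. *)
Definition switch_pair (F F' : R -> R) : Prop :=
  switch A B I F /\ switch A B I F' /\
  (forall x, I x -> A x -> F' (F x) = x) /\ (forall y, I y -> B y -> F (F' y) = y).

(* In a switch pair, [F] moving an [A]-point up and [F'] moving a [B]-point
   up together force one of the two to send a segment inwards. *)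
Lemma switch_pair_not_both_up F F' p q :
  switch_pair F F' -> A p -> I p -> p < F p -> B q -> I q -> q < F' q -> False.
Proof.
  intros [SF [SF' [F'F FF']]] Ap Ip Hp Bq Iq Hq.
  pose proof SF as [F_in [F_mono _]]. pose proof SF' as [F'_in _].
  assert (E : F (F' q) = q) by auto.
  destruct (Rtotal_order p (F' q)) as [Hlt | [Heq | Hgt]].
  - apply (switch_no_inward F p (F' q)); auto. lra.
  - rewrite <- Heq in E. lra.
  - assert (Hqp : q < F p) by (rewrite <- E; apply F_mono; auto).
    apply (switch_no_inward F' q (F p)); auto. now rewrite F'F.
Qed.

Hypothesis A_dense : dense A.
Hypothesis B_dense : dense B.
Hypothesis A_B_iso :
  order_isomorphic (fun x => A x /\ I x) (fun x => B x /\ I x).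

Lemma iso_switch_pair : exists F F', switch_pair F F'.
Proof.
  destruct A_B_iso as [f [g [gf [fg f_mono]]]].
  assert (disjoint' : forall x, ~ (B x /\ A x)) by (intros x [Bx Ax]; exact (disjoint x (conj Ax Bx))).
  assert (cover' : forall x, B x \/ A x) by (intro x; destruct (cover x); tauto).
  destruct (iso_extends_to_switch A B a b disjoint cover A_dense f g fg f_mono)
    as [F [SF EF]].
  destruct (iso_extends_to_switch B A a b disjoint' cover' B_dense g f gf
              (inverse_monotone _ _ f g fg f_mono)) as [F' [SF' EF']].
  exists F, F'. split; [exact SF | split; [now apply switch_sym | split]].
  - intros x Ix Ax. pose proof (EF (exist _ x (conj Ax Ix))) as E; simpl in E.
    now rewrite E, EF', gf.
  - intros y Iy By. pose proof (EF' (exist _ y (conj By Iy))) as E; simpl in E.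
    now rewrite E, EF, fg.
Qed.

Lemma descending_switch :
  exists M, switch A B I M /\ (forall y, I y -> M y < y) /\
    (forall u v, I u -> I v -> u < v -> exists t, I t /\ u < M t < v).
Proof.
  destruct iso_switch_pair as [F [F' pair]].
  pose proof pair as [SF [SF' [F'F FF']]].
  destruct (classic (exists y, I y /\ y < F y)) as [[y [Iy Hy]] | F_no_up].
  - destruct (classic (exists y, I y /\ y < F' y)) as [[y' [Iy' Hy']] | F'_no_up].
    + exfalso.
      destruct (switch_up_point A F y A_dense SF Iy Hy) as [p [Ap [Ip Hp]]].
      destruct (switch_up_point B F' y' B_dense SF' Iy' Hy') as [q [Bq [Iq Hq]]].
      exact (switch_pair_not_both_up F F' p q pair Ap Ip Hp Bq Iq Hq).
    + exists F'. split; [exact SF' | split; [exact (switch_descending F' SF' F'_no_up) |]].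
      apply (image_dense A); [exact A_dense |].
      intros x Ix Ax. exists (F x). split; [apply SF | apply F'F]; auto.
  - exists F. split; [exact SF | split; [exact (switch_descending F SF F_no_up) |]].
    apply (image_dense B); [exact B_dense |].
    intros y Iy By. exists (F' y). split; [apply SF' | apply FF']; auto.
Qed.

Lemma ascending_switch x0 :
  I x0 -> exists H c, switch A B I H /\ I c /\ c < H c.
Proof.
  intro Ix0. destruct iso_switch_pair as [F [F' [SF [SF' [F'F _]]]]].
  destruct (interval_unbounded_above a b x0 Ix0) as [v [Iv Hv]].
  destruct (dense_in_interval a b A x0 v) as [p [Ap [Ip _]]]; auto.
  pose proof SF as [F_in [_ [AB BA]]].
  destruct (Rtotal_order p (F p)) as [Hlt | [Heq | Hgt]].
  - now exists F, p.
  - now destruct (swap_moves F p (AB p Ip) (BA p Ip)).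
  - exists F', (F p). split; [exact SF' | split; [now apply F_in | now rewrite F'F]].
Qed.

End OnInterval.
End Switches.

(* The orbit of any point under a map [N] that, near every level [L > d],
   pushes everything just above [L] strictly below [L], eventually drops
   below any prescribed level [z > d]: otherwise the infimum [L >= z] of the
   orbit would be crossed. *)
Lemma orbit_eventually_below (N : R -> R) d :
  (forall L, d < L -> exists t, L < t /\ forall y, d < y < t -> N y < L) ->
  forall z y0, d < z -> exists n, Nat.iter n N y0 < z.
Proof.
  intros drops z y0 Hz. apply NNPP. intro never_below.
  set (orbit n := Nat.iter n N y0).
  assert (above : forall n, z <= orbit n)
    by (intro n; apply Rnot_lt_le; intro; apply never_below; now exists n).
  set (E := fun v => exists n, v = - orbit n).
  assert (HE : is_lub E (lub E)).
  { apply lub_spec; [exists (- z) | now exists (- orbit 0%nat), 0%nat].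
    intros v [n ->]. specialize (above n). lra. }
  set (L := - lub E). destruct HE as [E_upper E_least].
  assert (L_lower : forall n, L <= orbit n)
    by (intro n; assert (- orbit n <= lub E) by (apply E_upper; now exists n); unfold L; lra).
  assert (Hzl : z <= L).
  { assert (lub E <= - z); [| unfold L; lra].
    apply E_least. intros v [n ->]. specialize (above n). lra. }
  destruct (drops L ltac:(lra)) as [t [HLt Ht]].
  assert (Hn : exists n, orbit n < t).
  { apply NNPP. intro no_n. assert (lub E <= - t); [| unfold L in HLt; lra].
    apply E_least. intros v [n ->].
    assert (t <= orbit n) by (apply Rnot_lt_le; intro; apply no_n; now exists n). lra. }
  destruct Hn as [n Hn].
  assert (orbit (S n) < L).
  { change (N (orbit n) < L). apply Ht. specialize (above n). split; lra. }
  specialize (L_lower (S n)). lra.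
Qed.

Lemma double_step_drops (M : R -> R) d :
  (forall y, d < y -> d < M y) -> (forall x y, d < x -> x < y -> M x < M y) ->
  (forall y, d < y -> M y < y) ->
  (forall u v, d < u -> u < v -> exists t, d < t /\ u < M t < v) ->
  forall L, d < L -> exists t, L < t /\ forall y, d < y < t -> M (M y) < L.
Proof.
  intros M_in M_mono M_down M_hits L HL.
  destruct (M_hits (M L) L (M_in L HL) (M_down L HL)) as [t [Ht [H1 H2]]].
  assert (HLt : L < t).
  { destruct (Rtotal_order L t) as [? | [-> | Hgt]]; [assumption | lra |].
    assert (M t < M L) by (apply M_mono; auto). lra. }
  exists t. split; [exact HLt |]. intros y [Hy Hyt].
  assert (M y < M t) by (apply M_mono; auto).
  assert (M (M y) < M y) by (apply M_down, M_in, Hy). lra.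
Qed.

Lemma iter_monotone (N : R -> R) (J : R -> Prop) :
  (forall y, J y -> J (N y)) -> (forall x y, J x -> J y -> x <= y -> N x <= N y) ->
  forall n x y, J x -> J y -> x <= y -> Nat.iter n N x <= Nat.iter n N y.
Proof.
  intros N_in N_mono n. induction n as [| n IH]; intros x y Jx Jy Hxy; simpl; [exact Hxy |].
  apply N_mono; [apply Nat.iter_invariant; auto | apply Nat.iter_invariant; auto | auto].
Qed.

(* If every bounded interval splits into order-isomorphic colour classes,
   both colours are dense: the midpoint has one colour and its image under
   the isomorphism (or its inverse) has the other. *)
Lemma everywhere_iso_dense (A B : R -> Prop) :
  (forall x, A x \/ B x) ->
  (forall u v, u < v ->
     order_isomorphic (fun x => A x /\ ext_open_interval (Some u) (Some v) x)
                      (fun x => B x /\ ext_open_interval (Some u) (Some v) x)) ->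
  dense A /\ dense B.
Proof.
  intros cover iso.
  split; intros u v Huv; destruct (iso u v Huv) as [f [g _]];
    assert (Im : ext_open_interval (Some u) (Some v) ((u + v) / 2)) by (split; simpl; lra);
    destruct (cover ((u + v) / 2)) as [Am | Bm].
  - exists ((u + v) / 2). exact (conj Am Im).
  - eexists. exact (proj2_sig (g (exist _ _ (conj Bm Im)))).
  - eexists. exact (proj2_sig (f (exist _ _ (conj Am Im)))).
  - exists ((u + v) / 2). exact (conj Bm Im).
Qed.

(* A descending switch [M] of (d, +oo) with dense image yields, for every
   level [z > d] and point [y0], a colour-preserving weakly increasing
   self-map [K] of (d, +oo) sending [y0] below [z]: an iterate of [M o M]. *)
Lemma descending_switch_iterate (A B : R -> Prop) (M : R -> R) d :
  switch A B (ext_open_interval (Some d) None) M ->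
  (forall y, ext_open_interval (Some d) None y -> M y < y) ->
  (forall u v, ext_open_interval (Some d) None u ->
     ext_open_interval (Some d) None v -> u < v ->
     exists t, ext_open_interval (Some d) None t /\ u < M t < v) ->
  forall z y0, d < z -> exists K : R -> R,
    (forall y, d < y -> d < K y) /\ (forall x y, d < x -> d < y -> x <= y -> K x <= K y) /\
    (forall y, d < y -> A y -> A (K y)) /\ (forall y, d < y -> B y -> B (K y)) /\ K y0 < z.
Proof.
  intros [M_in [M_mono [M_AB M_BA]]] M_down M_hits z y0 Hz.
  assert (inJ : forall y, d < y -> ext_open_interval (Some d) None y)
    by (intros y Hy; exact (conj Hy Logic.I)).
  assert (M_in' : forall y, d < y -> d < M y) by (intros y Hy; apply (M_in y (inJ y Hy))).
  set (N := fun y => M (M y)).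
  assert (N_in : forall y, d < y -> d < N y) by (intros y Hy; apply M_in', M_in', Hy).
  assert (N_mono : forall x y, d < x -> d < y -> x <= y -> N x <= N y).
  { intros x y Hx Hy Hxy. destruct (Rle_lt_or_eq_dec x y Hxy) as [Hlt | ->]; [| lra].
    left. apply M_mono; try apply inJ, M_in'; auto. }
  assert (N_A : forall y, d < y /\ A y -> d < N y /\ A (N y)).
  { intros y [Hy Ay]. split; [auto |]. apply M_BA, M_AB; try apply inJ, M_in'; auto. }
  assert (N_B : forall y, d < y /\ B y -> d < N y /\ B (N y)).
  { intros y [Hy By]. split; [auto |]. apply M_AB, M_BA; try apply inJ, M_in'; auto. }
  destruct (orbit_eventually_below N d) with (z := z) (y0 := y0) as [n Hn]; [| exact Hz |].
  { apply (double_step_drops M d); [exact M_in' | | |].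
    - intros x y Hx Hxy. apply M_mono; try apply inJ; auto. lra.
    - intros y Hy. apply M_down, inJ, Hy.
    - intros u v Hu Huv.
      destruct (M_hits u v (inJ u Hu) (inJ v ltac:(lra)) Huv) as [t [It Ht]].
      exists t. split; [exact (proj1 It) | exact Ht]. }
  exists (Nat.iter n N). repeat split.
  - intros y Hy. exact (Nat.iter_invariant n _ N _ N_in y Hy).
  - exact (iter_monotone N (fun y => d < y) N_in N_mono n).
  - intros y Hy Ay. exact (proj2 (Nat.iter_invariant n _ N _ N_A y (conj Hy Ay))).
  - intros y Hy By. exact (proj2 (Nat.iter_invariant n _ N _ N_B y (conj Hy By))).
  - exact Hn.
Qed.

(* Let [H] be a switch of R moving [c] up to
   [d = H c], and [K] the map given by [descending_switch_iterate] for the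
   level [d + 1] and the point [H (d + 1)].  Then x |-> K (H x) is weakly
   increasing and exchanges the colours on [e, d + 1], where e = (c + d) / 2,
   sends [e] above [d] and [d + 1] below itself, against [no_inward_swap]. *)
Lemma up_switch_and_descending_switch_clash (A B : R -> Prop) (H M : R -> R) c :
  (forall x, ~ (A x /\ B x)) -> (forall x, A x \/ B x) ->
  switch A B (ext_open_interval None None) H -> c < H c ->
  switch A B (ext_open_interval (Some (H c)) None) M ->
  (forall y, ext_open_interval (Some (H c)) None y -> M y < y) ->
  (forall u v, ext_open_interval (Some (H c)) None u ->
     ext_open_interval (Some (H c)) None v -> u < v ->
     exists t, ext_open_interval (Some (H c)) None t /\ u < M t < v) ->
  False.
Proof.
  intros disjoint cover [_ [H_mono [H_AB H_BA]]] Hc SM M_down M_hits.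
  set (d := H c) in *.
  destruct (descending_switch_iterate A B M d SM M_down M_hits (d + 1) (H (d + 1)))
    as [K [K_in [K_mono [K_A [K_B HK]]]]]; [lra |].
  assert (inR : forall x, ext_open_interval None None x)
    by (intro; exact (conj Logic.I Logic.I)).
  set (e := (c + d) / 2).
  assert (He : forall x, e <= x -> d < H x)
    by (intros x Hx; apply H_mono; auto; unfold e in Hx; lra).
  apply (no_inward_swap A B disjoint cover (fun x => K (H x)) e (d + 1)).
  - unfold e. lra.
  - intros x y Hx Hxy Hy. apply K_mono; [apply He; lra | apply He; lra |].
    destruct (Rle_lt_or_eq_dec x y Hxy) as [Hlt | ->]; [| lra].
    left. now apply H_mono.
  - intros x [Hx _] Ax. apply K_B; [apply He, Hx | now apply H_AB].
  - intros x [Hx _] Bx. apply K_A; [apply He, Hx | now apply H_BA].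
  - assert (d < K (H e)) by (apply K_in, He; lra). unfold e in *. lra.
  - exact (Rlt_le _ _ HK).
Qed.

Theorem theorem1 (A B : R -> Prop) :
  (forall x, A x \/ B x) -> (forall x, ~ (A x /\ B x)) ->
  exists a b : option R, ext_lt a b /\
    ~ order_isomorphic (fun x => A x /\ ext_open_interval a b x)
                       (fun x => B x /\ ext_open_interval a b x).
Proof.
  intros cover disjoint. apply NNPP. intro no_bad_interval.
  assert (iso : forall a b, ext_lt a b ->
            order_isomorphic (fun x => A x /\ ext_open_interval a b x)
                             (fun x => B x /\ ext_open_interval a b x)).
  { intros a b Hab. apply NNPP. intro not_iso. apply no_bad_interval. now exists a, b. }
  destruct (everywhere_iso_dense A B cover (fun u v => iso (Some u) (Some v)))
    as [A_dense B_dense].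
  destruct (ascending_switch A B disjoint cover None None A_dense B_dense
              (iso None None Logic.I) 0 (conj Logic.I Logic.I)) as [H [c [SH [_ Hc]]]].
  destruct (descending_switch A B disjoint cover (Some (H c)) None A_dense B_dense
              (iso (Some (H c)) None Logic.I)) as [M [SM [M_down M_hits]]].
  exact (up_switch_and_descending_switch_clash A B H M c disjoint cover SH Hc SM M_down M_hits).
Qed.
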